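(* For odd $k\ge3$, let $G_k$ be the join of $k$ pairwise disjoint copies of the edgeless graph on three vertices (so $G_k$ has $3k$ vertices, and two vertices are adjacent iff they lie in different copies). Then $G_k$ is not chordal, $\alpha(G_k)=3$, and $\sum_{I\in\mathscr{C}(G_k)}(-1)^{|I|-1}=1+2^k$. Consequently, for events with $\Pr(A_v)=1$ for all vertices $v$ of $G_k$, the inequality $\Pr(\bigcup_v A_v)\ge\frac{1}{\alpha(G_k)}\sum_{I\in\mathscr{C}(G_k)}(-1)^{|I|-1}\Pr(\bigcap_{i\in I}A_i)$ fails.
   Context: A graph is chordal if it contains no cycle of length four or more as an induced subgraph. $\mathscr{C}(G)$ denotes the clique complex of $G$: the set of all non-empty subsets of vertices that are pairwise adjacent. $\alpha(G)$ denotes the independence number of $G$. *)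

From HB Require Import structures.
From mathcomp Require Import all_boot all_order all_algebra.
Set Implicit Arguments. Unset Strict Implicit. Unset Printing Implicit Defensive.
Import Order.TTheory GRing.Theory Num.Theory.

(* Simple graphs are symmetric irreflexive relations e : rel T on a finType T. *)

Definition induced_cycle (T : finType) (e : rel T) (c : seq T) : bool :=
  match c with
  | [::] => false
  | x :: _ =>
    [&& uniq c, 3 < size c &
      [forall i : 'I_(size c), forall j : 'I_(size c),
         e (nth x c i) (nth x c j) ==
         ((j == (i.+1 %% size c) :> nat) || (i == (j.+1 %% size c) :> nat))]]
  end.

Definition chordal (T : finType) (e : rel T) : Prop :=
  forall c : seq T, ~~ induced_cycle e c.

Definition is_clique (T : finType) (e : rel T) (A : {set T}) : bool :=
  (A != set0) && [forall x in A, forall y in A, (x != y) ==> e x y].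

Definition clique_complex (T : finType) (e : rel T) : {set {set T}} :=
  [set A : {set T} | is_clique e A].

Definition is_independent (T : finType) (e : rel T) (A : {set T}) : bool :=
  [forall x in A, forall y in A, ~~ e x y].

Definition alpha (T : finType) (e : rel T) : nat :=
  \max_(A : {set T} | is_independent e A) #|A|.

(* G_k: join of k copies of the edgeless graph on 3 vertices;
   vertex (i, a) = vertex a of copy i. *)
Definition Gk (k : nat) : rel ('I_k * 'I_3)%type :=
  fun x y => x.1 != y.1.
Arguments Gk k : clear implicits.

Definition Pr (R : numDomainType) (Omega : finType) (p : Omega -> R)
  (E : {set Omega}) : R := \sum_(w in E) p w.

From HB Require Import structures.
From mathcomp Require Import all_boot all_order all_algebra.
Set Implicit Arguments. Unset Strict Implicit. Unset Printing Implicit Defensive.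
Import Order.TTheory GRing.Theory Num.Theory.

(* G_k is the join of #|I| = k copies of the edgeless graph on X = 'I_3.
   Two vertices in distinct copies and two in a common copy form an induced
   4-cycle, and an independent set lies in a single copy.  Together with the
   empty set, the cliques are exactly the graphs of the partial maps I -> X,
   so the signed count of the empty set and the cliques factors over I as
   (1 - #|X|)^#|I| = (-2)^k.  Finally if every event is sure, so are all
   intersections and the union, and the inequality reduces to 3 >= 1 + 2^k. *)

Definition join_edgeless (I X : finType) : rel (I * X) := fun x y => x.1 != y.1.
Arguments join_edgeless : clear implicits.

Lemma in_cliques0 (T : finType) (e : rel T) (C : {set T}) :
  (C \in set0 |: clique_complex e) =
  [forall x in C, forall y in C, (x != y) ==> e x y].
Proof.
rewrite !inE /is_clique; have [-> | _] //= := eqVneq C set0.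
by apply/esym/forall_inP => x; rewrite inE.
Qed.

Section JoinEdgeless.
Variables I X : finType.
Local Notation G := (join_edgeless I X).

Lemma join_edgeless_not_chordal : 1 < #|I| -> 1 < #|X| -> ~ chordal G.
Proof.
move=> /card_gt1P[a [b [_ _ ab]]] /card_gt1P[u [v [_ _ uv]]].
have ba : b != a by rewrite eq_sym.
move/(_ [:: (a, u); (b, u); (a, v); (b, v)]); apply/negP/negPn.
rewrite /induced_cycle /=; apply/andP; split.
  by rewrite !inE !xpair_eqE !eqxx (negbTE ab) (negbTE ba) (negbTE uv).
apply/forallP => -[[|[|[|[|i]]]] Hi] //; apply/forallP => -[[|[|[|[|j]]]] Hj] //.
all: by rewrite /= /join_edgeless /= ?eqxx ?ab ?ba.
Qed.

Lemma alpha_join_edgeless : 0 < #|I| -> alpha G = #|X|.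
Proof.
move=> /card_gt0P[i0 _]; apply/eqP; rewrite eqn_leq; apply/andP; split.
  apply/bigmax_leqP => A /forallP indA.
  have [->|[x xA]] := set_0Vmem A; first by rewrite cards0.
  have sub : A \subset [set (x.1, c) | c : X].
    apply/subsetP => y yA; apply/imsetP; exists y.2 => //.
    have /forallP/(_ y) := implyP (indA x) xA; rewrite yA /= negbK => /eqP ->.
    by case: y {yA}.
  exact: leq_trans (subset_leq_card sub) (leq_imset_card _ _).
have card_fibre : #|[set (i0, c) | c : X]| = #|X|.
  by rewrite card_imset // => c d [].
rewrite -[X in X <= _]card_fibre; apply: leq_bigmax_cond.
apply/forall_inP => _ /imsetP[c _ ->]; apply/forall_inP => _ /imsetP[d _ ->].
by rewrite /join_edgeless /= negbK.
Qed.

Definition pfun_graph (f : {ffun I -> option X}) : {set I * X} :=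
  [set x | f x.1 == Some x.2].

Definition pfun_of_set (C : {set I * X}) : {ffun I -> option X} :=
  [ffun i => [pick a | (i, a) \in C]].

Lemma pfun_graphK : cancel pfun_graph pfun_of_set.
Proof.
move=> f; apply/ffunP => i; rewrite ffunE.
case: pickP => [a | none]; first by rewrite inE => /eqP.
by case Ef: (f i) => [a|] //; move: (none a); rewrite inE Ef eqxx.
Qed.

Lemma card_pfun_graph f : #|pfun_graph f| = #|[set i | f i != None]|.
Proof.
have fst_inj : {in pfun_graph f &, injective fst}.
  move=> [i a] [j b]; rewrite !inE /= => /eqP fi /eqP fj ij.
  by move: fj; rewrite -ij fi => -[->]; rewrite ij.
rewrite -(card_in_imset fst_inj); apply: eq_card => i.
rewrite inE; apply/imsetP/idP => [[[j a]] |].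
  by rewrite inE /= => /eqP fj ->; rewrite fj.
by case Ei: (f i) => [a|] // _; exists (i, a); rewrite // inE Ei.
Qed.

Lemma pfun_graph_clique f :
  [forall x in pfun_graph f, forall y in pfun_graph f, (x != y) ==> G x y].
Proof.
apply/forall_inP => -[i a]; rewrite inE => /eqP fi.
apply/forall_inP => -[j b]; rewrite inE => /eqP fj; apply/implyP; apply: contra.
by move=> /eqP /= ij; move: fj; rewrite /= -ij fi => -[->].
Qed.

Lemma pfun_of_setK (C : {set I * X}) :
  [forall x in C, forall y in C, (x != y) ==> G x y] ->
  pfun_graph (pfun_of_set C) = C.
Proof.
move=> /forall_inP clC; apply/setP => -[i a]; rewrite inE ffunE /=.
case: pickP => [b iC | none]; last by rewrite none.
apply/eqP/idP => [[<-] // | iaC].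
have /forall_inP/(_ _ iC) := clC _ iaC.
by rewrite /join_edgeless /= eqxx implybF negbK => /eqP [->].
Qed.

Lemma cliques0_join_edgeless :
  set0 |: clique_complex G = pfun_graph @: [set: {ffun I -> option X}].
Proof.
apply/setP => C; rewrite in_cliques0; apply/idP/imsetP => [clC | [f _ ->]].
  by exists (pfun_of_set C); rewrite ?pfun_of_setK.
exact: pfun_graph_clique.
Qed.

Local Open Scope ring_scope.

Lemma sum_sign_cliques0 (R : pzRingType) :
  \sum_(C in set0 |: clique_complex G) (-1) ^+ #|C| = (1 - #|X|%:R) ^+ #|I| :> R.
Proof.
rewrite cliques0_join_edgeless big_imset /=; last first.
  by move=> f g _ _; apply: (can_inj pfun_graphK).
pose sign (o : option X) : R := if o is Some _ then -1 else 1.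
have sign_graph f : (-1) ^+ #|pfun_graph f| = \prod_i sign (f i).
  rewrite card_pfun_graph -prodr_const big_mkcond /=; apply: eq_bigr => i _.
  by rewrite inE; case: (f i).
rewrite (eq_bigl predT) => [|f]; last by rewrite inE.
rewrite (eq_bigr _ (fun f _ => sign_graph f)) -(bigA_distr_bigA (fun _ => sign)).
rewrite -prodr_const; apply: eq_bigr => i _.
rewrite (bigD1 None) //= (eq_bigr (fun _ => -1)) => [|[]//].
by rewrite sumr_const cardC1 card_option mulNrn.
Qed.

Lemma euler_clique_complex_join_edgeless (R : pzRingType) :
  \sum_(C in clique_complex G) (-1) ^+ #|C|.-1 = 1 - (1 - #|X|%:R) ^+ #|I| :> R.
Proof.
have set0_cc : set0 \notin clique_complex G by rewrite inE /is_clique eqxx.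
rewrite -sum_sign_cliques0 big_setU1 //= cards0 expr0 opprD addNKr -sumrN.
apply: eq_bigr => C; rewrite inE => /andP[]; rewrite -card_gt0 => /prednK {2}<- _.
by rewrite exprS mulN1r opprK.
Qed.

End JoinEdgeless.

Local Open Scope ring_scope.

Lemma one_sub_three_exp_odd (R : pzRingType) k :
  odd k -> (1 - 3%:R) ^+ k = - 2%:R ^+ k :> R.
Proof.
move=> k_odd; have -> : 1 - 3%:R = - 2%:R :> R.
  by rewrite -[3%N]/(1 + 2)%N natrD mulr1n opprD addrA subrr add0r.
by rewrite exprNn -signr_odd k_odd mulN1r.
Qed.

Section SureEvents.
Variables (R : numDomainType) (Omega : finType) (p : Omega -> R).
Hypotheses (p_ge0 : forall w, 0 <= p w) (p_sum1 : \sum_w p w = 1).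

Lemma Pr_eq1P (B : {set Omega}) :
  Pr p B = 1 <-> (forall w, w \notin B -> p w = 0).
Proof.
have split1 : Pr p B + \sum_(w | w \notin B) p w = 1.
  by rewrite -p_sum1 [RHS](bigID (mem B)).
split=> [PB | nullB].
  have null : \sum_(w | w \notin B) p w = 0.
    by apply: (addrI 1); rewrite addr0 -{1}PB split1.
  by move=> w wB; apply: (psumr_eq0P _ null).
by move: split1; rewrite big1 ?addr0.
Qed.

Lemma Pr_eq1_subset (B C : {set Omega}) : B \subset C -> Pr p B = 1 -> Pr p C = 1.
Proof.
move=> /subsetP BC /Pr_eq1P nullB; apply/Pr_eq1P => w wC.
by apply: nullB; apply: contra wC; apply: BC.
Qed.

Lemma Pr_bigcap_eq1 (J : finType) (P : {pred J}) (A : J -> {set Omega}) :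
  (forall j, P j -> Pr p (A j) = 1) -> Pr p (\bigcap_(j | P j) A j) = 1.
Proof.
move=> sureA; apply/Pr_eq1P => w /bigcapP notall.
have [/exists_inP[j Pj wAj] | /exists_inPn allA] :=
  boolP [exists (j | P j), w \notin A j].
  exact: (iffLR (Pr_eq1P _) (sureA j Pj)).
by case: notall => j Pj; have := allA j Pj; rewrite negbK.
Qed.

End SureEvents.

Local Close Scope ring_scope.

Theorem mainTheorem11 (k : nat) (hodd : odd k) (hk : 3 <= k) :
  ~ chordal (Gk k) /\
  alpha (Gk k) = 3 /\
  (\sum_(I in clique_complex (Gk k)) (-1) ^+ (#|I|.-1) = 1 + 2 ^+ k :> int)%R /\
  (forall (R : realFieldType) (Omega : finType) (p : Omega -> R),
     (forall w, 0 <= p w)%R -> (\sum_w p w = 1)%R ->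
     forall A : ('I_k * 'I_3)%type -> {set Omega},
       (forall v, Pr p (A v) = 1)%R ->
       ~ (Pr p (\bigcup_v A v) >=
          (alpha (Gk k))%:R^-1 *
          \sum_(I in clique_complex (Gk k))
             (-1) ^+ (#|I|.-1) * Pr p (\bigcap_(i in I) A i))%R).
Proof.
have k_gt0 : (0 < k)%N by apply: leq_trans hk.
have alphaGk : alpha (Gk k) = 3 by rewrite alpha_join_edgeless card_ord.
have eulerGk (R : pzRingType) :
    (\sum_(I in clique_complex (Gk k)) (-1) ^+ (#|I|.-1) = 1 + 2%:R ^+ k :> R)%R.
  by rewrite euler_clique_complex_join_edgeless !card_ord one_sub_three_exp_odd ?opprK.
split; first by apply: join_edgeless_not_chordal; rewrite card_ord // (leq_trans _ hk).
split=> //; split; first exact: eulerGk.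
move=> R Omega p p_ge0 p_sum1 A sureA.
pose v0 : 'I_k * 'I_3 := (Ordinal k_gt0, ord0).
rewrite (Pr_eq1_subset p_ge0 p_sum1 (bigcup_sup v0 isT) (sureA v0)).
rewrite (eq_bigr (fun I : {set _} => (-1) ^+ #|I|.-1 : R)%R) => [|I _]; last first.
  by rewrite Pr_bigcap_eq1 ?mulr1.
rewrite eulerGk alphaGk ler_pdivrMl ?ltr0n // mulr1.
apply/negP; rewrite -natrX addrC natr1 ler_nat -ltnNge ltnS.
exact: leq_trans (leq_pexp2l (isT : 0 < 2) hk).
Qed.
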